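(* Let $G$ be a finite group with identity $e$. If $G$ has a sequencing whose first element is $x$, then $G$ has an $S$-sequencing for $S=G\setminus\{e,x\}$.
   Context: For $S\subseteq G\setminus\{e\}$ with $|S|=k$, an $S$-sequencing of $G$ is an ordering $(g_1,\dots,g_k)$ of the elements of $S$ (each used once) such that the partial products $h_0=e$, $h_i=g_1\cdots g_i$ ($1\le i\le k$) are pairwise distinct. A sequencing of $G$ is an $S$-sequencing with $S=G\setminus\{e\}$. *)

From mathcomp Require Import all_boot all_fingroup.
Set Implicit Arguments. Unset Strict Implicit. Unset Printing Implicit Defensive.
Local Open Scope group_scope.

Definition partial_prods (gT : finGroupType) (s : seq gT) : seq gT :=
  [seq \prod_(g <- take i s) g | i <- iota 0 (size s).+1].

Definition is_S_sequencing (gT : finGroupType) (S : {set gT}) (s : seq gT) : Prop :=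
  [/\ 1 \notin S, uniq s, s =i S & uniq (partial_prods s)].

Definition is_sequencing (gT : finGroupType) (s : seq gT) : Prop :=
  is_S_sequencing ([set: gT] :\ 1) s.

From mathcomp Require Import all_boot all_fingroup.
Local Open Scope group_scope.

(* Dropping the first element x of a sequencing removes x from the set being
   sequenced, and the partial products of the remaining sequence are the
   partial products h_1, ..., h_k of the original one, left-translated by x^-1;
   left translation is injective, so they stay pairwise distinct. *)

Lemma partial_prods_cons (gT : finGroupType) (x : gT) (s : seq gT) :
  partial_prods (x :: s) = 1 :: map ( *%g x) (partial_prods s).
Proof.
rewrite /partial_prods.
have -> : iota 0 (size (x :: s)).+1 = 0 :: map (addn 1) (iota 0 (size s).+1).
  by rewrite -iotaDl.
rewrite map_cons take0 big_nil -!map_comp; congr (_ :: _).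
by apply: eq_map => i /=; rewrite big_cons.
Qed.

Lemma uniq_partial_prods_behead (gT : finGroupType) (x : gT) (s : seq gT) :
  uniq (partial_prods (x :: s)) -> uniq (partial_prods s).
Proof.
by rewrite partial_prods_cons cons_uniq (map_inj_uniq (mulgI x)) => /andP[].
Qed.

Lemma S_sequencing_behead (gT : finGroupType) (S : {set gT}) (x : gT) (s : seq gT) :
  is_S_sequencing S (x :: s) -> is_S_sequencing (S :\ x) s.
Proof.
case=> S1F /andP[x_notin_s uniq_s] s_eq_S /uniq_partial_prods_behead; split=> //.
  by rewrite !inE negb_and S1F orbT.
move=> y; rewrite !inE -s_eq_S inE.
by case: eqP => [-> | _] //=; rewrite (negbTE x_notin_s).
Qed.

Theorem lemma4p4 (gT : finGroupType) (x : gT) (s' : seq gT) :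
  is_sequencing (x :: s') ->
  exists t : seq gT, is_S_sequencing ([set: gT] :\: [set 1; x]) t.
Proof.
move=> /S_sequencing_behead seq_s'; exists s'.
by rewrite -setDDl.
Qed.
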